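(* Let $A,B,C,D,E$ be five distinct points in the plane, not all collinear, such that $$AB\parallel EC,\quad BC\parallel AD,\quad CD\parallel BE,\quad DE\parallel CA,\quad EA\parallel DB.$$ Then $ABCDE$ is either an affine regular pentagon or an affine regular star pentagon. That is, there exist an affine bijection $f$ of the plane and a regular pentagon with vertices $V_0,\dots,V_4$ in cyclic order such that either $$(A,B,C,D,E)=(f(V_0),f(V_1),f(V_2),f(V_3),f(V_4))$$ or $$(A,B,C,D,E)=(f(V_0),f(V_2),f(V_4),f(V_1),f(V_3)).$$
   Context: An affine map of the plane is a bijection of the plane that maps collinear points to collinear points. $XY\parallel ZW$ means that the line through $X,Y$ is parallel to the line through $Z,W$. *)

From Stdlib Require Import Reals List.
Open Scope R_scope.

Definition point := (R * R)%type.

Definition cross (P Q R0 S : point) : R :=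
  (fst Q - fst P) * (snd S - snd R0) - (snd Q - snd P) * (fst S - fst R0).

Definition collinear (P Q S : point) : Prop := cross P Q P S = 0.

(* XY || ZW : the line through X,Y is parallel to the line through Z,W
   (used only for X <> Y, Z <> W). *)
Definition parallel (X Y Z W : point) : Prop := cross X Y Z W = 0.

Definition all_collinear (l : list point) : Prop :=
  exists P Q : point, P <> Q /\ forall X, In X l -> collinear P Q X.

Definition affine_map (f : point -> point) : Prop :=
  (forall x y, f x = f y -> x = y) /\ (forall y, exists x, f x = y) /\
  (forall P Q S, collinear P Q S -> collinear (f P) (f Q) (f S)).

Definition regular_pentagon (V0 V1 V2 V3 V4 : point) : Prop :=
  exists (c : point) (r th s : R), 0 < r /\ (s = 1 \/ s = -1) /\
    let V k := (fst c + r * cos (th + s * 2 * PI * INR k / 5),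
                snd c + r * sin (th + s * 2 * PI * INR k / 5)) in
    V0 = V 0%nat /\ V1 = V 1%nat /\ V2 = V 2%nat /\ V3 = V 3%nat /\ V4 = V 4%nat.

From Stdlib Require Import Reals List Lra.
Open Scope R_scope.

(* A, B, E cannot be collinear, since then the parallelisms put all five
   points on one line.  In the affine frame with origin A and axes towards B
   and E, the five parallelisms force C = (x, 1) and D = (1, x) with
   x^2 = x + 1, so the pentagon is determined up to an affine map by a root of
   this quadratic.  The regular pentagon realises one root r, and read as a
   star pentagon it realises the other root 1 - r; the affine map between the
   two frames carries the matching one onto ABCDE. *)

Lemma Rmult_integral_l (a b : R) : a <> 0 -> a * b = 0 -> b = 0.
Proof. intros Ha Hab. destruct (Rmult_integral a b Hab); [contradiction | assumption]. Qed.

Lemma collinear_parallel (P Q X Y : point) :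
  collinear P Q X -> parallel P Q X Y -> collinear P Q Y.
Proof.
  unfold collinear, parallel. intros HX HXY.
  replace (cross P Q P Y) with (cross P Q P X + cross P Q X Y)
    by (unfold cross; ring).
  rewrite HX, HXY. ring.
Qed.

Lemma parallel_trans (P Q X Y Z W : point) :
  P <> Q -> parallel X Y P Q -> parallel P Q Z W -> parallel X Y Z W.
Proof.
  destruct P as [p1 p2], Q as [q1 q2], X as [x1 x2], Y as [y1 y2],
    Z as [z1 z2], W as [w1 w2].
  unfold parallel, cross; simpl. intros HPQ H1 H2.
  set (k := (y1 - x1) * (w2 - z2) - (y2 - x2) * (w1 - z1)).
  (* For plane vectors, (a × b) v = (v × b) a - (v × a) b; take v = Q - P. *)
  assert (K1 : (q1 - p1) * k = 0).
  { replace ((q1 - p1) * k) with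
      ((w1 - z1) * ((y1 - x1) * (q2 - p2) - (y2 - x2) * (q1 - p1))
       + (y1 - x1) * ((q1 - p1) * (w2 - z2) - (q2 - p2) * (w1 - z1)))
      by (unfold k; ring).
    rewrite H1, H2. ring. }
  assert (K2 : (q2 - p2) * k = 0).
  { replace ((q2 - p2) * k) with
      ((w2 - z2) * ((y1 - x1) * (q2 - p2) - (y2 - x2) * (q1 - p1))
       + (y2 - x2) * ((q1 - p1) * (w2 - z2) - (q2 - p2) * (w1 - z1)))
      by (unfold k; ring).
    rewrite H1, H2. ring. }
  destruct (Req_dec q1 p1), (Req_dec q2 p2).
  - subst. contradiction.
  - eapply Rmult_integral_l; [|exact K2]. lra.
  - eapply Rmult_integral_l; [|exact K1]. lra.
  - eapply Rmult_integral_l; [|exact K1]. lra.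
Qed.

Definition frame_point (O U V p : point) : point :=
  (fst O + fst p * (fst U - fst O) + snd p * (fst V - fst O),
   snd O + fst p * (snd U - snd O) + snd p * (snd V - snd O)).

Definition frame_coords (O U V X : point) : point :=
  (cross O X O V / cross O U O V, cross O U O X / cross O U O V).

Section Frame.
Variables O U V : point.

Lemma frame_point_vertices :
  frame_point O U V (0, 0) = O /\ frame_point O U V (1, 0) = U /\
  frame_point O U V (0, 1) = V.
Proof.
  destruct O, U, V; unfold frame_point; simpl.
  repeat split; f_equal; ring.
Qed.

Lemma cross_frame_point p q r s :
  cross (frame_point O U V p) (frame_point O U V q)
        (frame_point O U V r) (frame_point O U V s)
  = cross O U O V * cross p q r s.
Proof. destruct O, U, V, p, q, r, s; unfold frame_point, cross; simpl; ring. Qed.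

Hypothesis frame_nondeg : ~ collinear O U V.

Lemma frame_point_coords X : frame_point O U V (frame_coords O U V X) = X.
Proof.
  unfold collinear in frame_nondeg.
  destruct O, U, V, X; unfold frame_point, frame_coords, cross in *; simpl in *.
  f_equal; field; assumption.
Qed.

Lemma frame_coords_point p : frame_coords O U V (frame_point O U V p) = p.
Proof.
  unfold collinear in frame_nondeg.
  destruct O, U, V, p; unfold frame_point, frame_coords, cross in *; simpl in *.
  f_equal; field; assumption.
Qed.

Lemma frame_coords_vertices :
  frame_coords O U V O = (0, 0) /\ frame_coords O U V U = (1, 0) /\
  frame_coords O U V V = (0, 1).
Proof.
  destruct frame_point_vertices as [HO [HU HV]].
  split; [|split];
    [rewrite <- HO at 2 | rewrite <- HU at 2 | rewrite <- HV at 2];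
    apply frame_coords_point.
Qed.

Lemma frame_point_affine : affine_map (frame_point O U V).
Proof.
  split; [|split].
  - intros p q Hpq.
    rewrite <- (frame_coords_point p), <- (frame_coords_point q), Hpq; reflexivity.
  - intro Y. exists (frame_coords O U V Y). apply frame_point_coords.
  - unfold collinear. intros p q r Hpqr.
    rewrite cross_frame_point, Hpqr; ring.
Qed.

Lemma frame_coords_affine : affine_map (frame_coords O U V).
Proof.
  split; [|split].
  - intros X Y HXY.
    rewrite <- (frame_point_coords X), <- (frame_point_coords Y), HXY; reflexivity.
  - intro p. exists (frame_point O U V p). apply frame_coords_point.
  - unfold collinear. intros X Y Z HXYZ.
    rewrite <- (frame_point_coords X), <- (frame_point_coords Y),
      <- (frame_point_coords Z), cross_frame_point in HXYZ.
    exact (Rmult_integral_l _ _ frame_nondeg HXYZ).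
Qed.

End Frame.

Lemma affine_map_comp (f g : point -> point) :
  affine_map f -> affine_map g -> affine_map (fun X => f (g X)).
Proof.
  intros [finj [fsurj fcol]] [ginj [gsurj gcol]]. split; [|split].
  - intros X Y H. apply ginj, finj, H.
  - intro Z. destruct (fsurj Z) as [Y <-]. destruct (gsurj Y) as [X <-]. eauto.
  - intros P Q S H. apply fcol, gcol, H.
Qed.

Definition pentagon_parallels (A B C D E : point) : Prop :=
  parallel A B E C /\ parallel B C A D /\ parallel C D B E /\
  parallel D E C A /\ parallel E A D B.

Lemma pentagon_parallels_frame_point (O U V p0 p1 p2 p3 p4 : point) :
  ~ collinear O U V ->
  pentagon_parallels (frame_point O U V p0) (frame_point O U V p1)
    (frame_point O U V p2) (frame_point O U V p3) (frame_point O U V p4) ->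
  pentagon_parallels p0 p1 p2 p3 p4.
Proof.
  intro Hd. unfold pentagon_parallels, parallel. rewrite !cross_frame_point.
  intros [H1 [H2 [H3 [H4 H5]]]].
  repeat split; eapply Rmult_integral_l; eassumption.
Qed.

Lemma pentagon_parallels_standard (x y u v : R) :
  pentagon_parallels (0, 0) (1, 0) (x, y) (u, v) (0, 1) ->
  y = 1 /\ u = 1 /\ v = x /\ x * x = x + 1.
Proof.
  unfold pentagon_parallels, parallel, cross; simpl.
  intros [H1 [H2 [H3 [H4 H5]]]].
  assert (y = 1) by lra. assert (u = 1) by lra. subst y u.
  assert (v = x) by lra. subst v. lra.
Qed.

Definition pentagon_coord (x : R) (A B C D E : point) : Prop :=
  ~ collinear A B E /\
  C = frame_point A B E (x, 1) /\ D = frame_point A B E (1, x).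

Lemma pentagon_parallels_coord {A B C D E : point} :
  ~ collinear A B E -> pentagon_parallels A B C D E ->
  exists x, x * x = x + 1 /\ pentagon_coord x A B C D E.
Proof.
  intros Hd Hpar.
  destruct (frame_point_vertices A B E) as [HA [HB HE]].
  pose proof (frame_point_coords A B E Hd C) as HC.
  pose proof (frame_point_coords A B E Hd D) as HD.
  destruct (frame_coords A B E C) as [x y], (frame_coords A B E D) as [u v].
  assert (Hstd : pentagon_parallels (0, 0) (1, 0) (x, y) (u, v) (0, 1)).
  { apply (pentagon_parallels_frame_point A B E); [assumption|].
    rewrite HA, HB, HC, HD, HE. assumption. }
  destruct (pentagon_parallels_standard x y u v Hstd) as [-> [-> [-> Hx]]].
  exists x. unfold pentagon_coord. auto.
Qed.

Lemma golden_roots {x r : R} :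
  x * x = x + 1 -> r * r = r + 1 -> x = r \/ x = 1 - r.
Proof.
  intros Hx Hr.
  assert (Hfac : (x - r) * (x - (1 - r)) = 0) by nra.
  destruct (Rmult_integral _ _ Hfac); [left | right]; lra.
Qed.

Lemma frame_point_rebase (O U V q r p : point) :
  frame_point O (frame_point O U V q) (frame_point O U V r) p =
  frame_point O U V (fst p * fst q + snd p * fst r, fst p * snd q + snd p * snd r).
Proof. destruct O, U, V; unfold frame_point; simpl; f_equal; ring. Qed.

Lemma pentagon_coord_star {x : R} {A B C D E : point} :
  x * x = x + 1 -> pentagon_coord x A B C D E -> pentagon_coord (1 - x) A C E B D.
Proof.
  intros Hx [Hd [-> ->]].
  destruct (frame_point_vertices A B E) as [HA [HB HE]].
  unfold pentagon_coord, collinear. rewrite !frame_point_rebase; simpl.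
  repeat split.
  - rewrite <- HA at 1 3. rewrite cross_frame_point. unfold cross; simpl.
    intro H. apply Rmult_integral in H as [H | H]; [contradiction | nra].
  - rewrite <- HE at 1. f_equal. f_equal; nra.
  - rewrite <- HB at 1. f_equal. f_equal; nra.
Qed.

Lemma pentagon_coord_affine_equiv {x : R} {P0 P1 P2 P3 P4 A B C D E : point} :
  pentagon_coord x P0 P1 P2 P3 P4 -> pentagon_coord x A B C D E ->
  exists f, affine_map f /\ (A, B, C, D, E) = (f P0, f P1, f P2, f P3, f P4).
Proof.
  intros [HP [-> ->]] [HA [-> ->]].
  exists (fun X => frame_point A B E (frame_coords P0 P1 P4 X)). split.
  - apply affine_map_comp; [apply frame_point_affine | apply frame_coords_affine]; assumption.
  - destruct (frame_coords_vertices P0 P1 P4 HP) as [-> [-> ->]].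
    destruct (frame_point_vertices A B E) as [-> [-> ->]].
    rewrite !frame_coords_point by assumption. reflexivity.
Qed.

Lemma pentagon_frame_not_collinear {A B C D E : point} :
  NoDup (A :: B :: C :: D :: E :: nil) ->
  ~ all_collinear (A :: B :: C :: D :: E :: nil) ->
  parallel A B E C -> parallel E A D B -> ~ collinear A B E.
Proof.
  intros Hnd Hnc H1 H5 HABE. apply Hnc.
  inversion Hnd as [|? ? HA _]; subst.
  assert (AB : A <> B) by (intro; apply HA; simpl; auto).
  assert (AE : E <> A) by (intro; apply HA; simpl; auto).
  assert (HABD : collinear A B D).
  { assert (HDB : parallel A B D B).
    { apply (parallel_trans E A); [assumption| |].
      - revert HABE. unfold collinear, parallel, cross. intro. lra.
      - revert H5. unfold parallel, cross. intro. lra. }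
    revert HDB. unfold collinear, parallel, cross. intro. lra. }
  exists A, B. split; [assumption|].
  intros X HX. simpl in HX.
  destruct HX as [<- | [<- | [<- | [<- | [<- | []]]]]];
    try (unfold collinear, cross; ring); try assumption.
  apply (collinear_parallel A B E); assumption.
Qed.

Definition unit_circle_point (t : R) : point := (cos t, sin t).

Lemma unit_circle_chords_parallel (a b c e : R) :
  (exists k : Z, (c + e) - (a + b) = 2 * (IZR k * PI)) ->
  parallel (unit_circle_point a) (unit_circle_point b)
           (unit_circle_point c) (unit_circle_point e).
Proof.
  intros [k Hk].
  assert (Hs : sin ((e + c) / 2 - (b + a) / 2) = 0).
  { apply sin_eq_0_1. exists k. lra. }
  unfold parallel, cross, unit_circle_point; simpl.
  rewrite (form2 b a), (form4 b a), (form2 e c), (form4 e c).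
  rewrite sin_minus in Hs.
  transitivity (4 * sin ((b - a) / 2) * sin ((e - c) / 2) *
    (sin ((e + c) / 2) * cos ((b + a) / 2) - cos ((e + c) / 2) * sin ((b + a) / 2))).
  - ring.
  - rewrite Hs. ring.
Qed.

Definition pentagon_vertex (k : nat) : point := unit_circle_point (2 * PI * INR k / 5).

Lemma regular_pentagon_vertices :
  regular_pentagon (pentagon_vertex 0) (pentagon_vertex 1) (pentagon_vertex 2)
    (pentagon_vertex 3) (pentagon_vertex 4).
Proof.
  exists (0, 0), 1, 0, 1. split; [lra|]. split; [left; reflexivity|].
  unfold pentagon_vertex, unit_circle_point; simpl fst; simpl snd.
  repeat split; f_equal; rewrite Rplus_0_l, Rmult_1_l, Rplus_0_l, Rmult_1_l; reflexivity.
Qed.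

Lemma pentagon_vertices_parallels :
  pentagon_parallels (pentagon_vertex 0) (pentagon_vertex 1) (pentagon_vertex 2)
    (pentagon_vertex 3) (pentagon_vertex 4).
Proof.
  unfold pentagon_parallels, pentagon_vertex.
  repeat split; apply unit_circle_chords_parallel; simpl INR;
    [exists 1%Z | exists 0%Z | exists 0%Z | exists (-1)%Z | exists 0%Z];
    simpl IZR; field.
Qed.

Lemma pentagon_vertices_not_collinear :
  ~ collinear (pentagon_vertex 0) (pentagon_vertex 1) (pentagon_vertex 4).
Proof.
  set (t := 2 * PI / 5).
  assert (H0 : pentagon_vertex 0 = (1, 0)).
  { unfold pentagon_vertex, unit_circle_point. simpl INR.
    rewrite Rmult_0_r, Rdiv_0_l, cos_0, sin_0. reflexivity. }
  assert (H1 : pentagon_vertex 1 = (cos t, sin t)).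
  { unfold pentagon_vertex, unit_circle_point, t. simpl INR. rewrite Rmult_1_r. reflexivity. }
  assert (H4 : pentagon_vertex 4 = (cos t, - sin t)).
  { unfold pentagon_vertex, unit_circle_point. simpl INR.
    replace (2 * PI * (1 + 1 + 1 + 1) / 5) with (- t + 2 * PI) by (unfold t; field).
    rewrite cos_plus, sin_plus, cos_2PI, sin_2PI, cos_neg, sin_neg. f_equal; ring. }
  assert (Hs : 0 < sin t) by (apply sin_gt_0; unfold t; pose proof PI_RGT_0; lra).
  assert (Hc : cos t < 1).
  { pose proof (sin2_cos2 t) as Hsc. unfold Rsqr in Hsc. pose proof (COS_bound t). nra. }
  rewrite H0, H1, H4. unfold collinear, cross; simpl. nra.
Qed.

Theorem proposition2 (A B C D E : point) :
  NoDup (A :: B :: C :: D :: E :: nil) ->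
  ~ all_collinear (A :: B :: C :: D :: E :: nil) ->
  parallel A B E C -> parallel B C A D -> parallel C D B E ->
  parallel D E C A -> parallel E A D B ->
  exists (f : point -> point) (V0 V1 V2 V3 V4 : point),
    affine_map f /\ regular_pentagon V0 V1 V2 V3 V4 /\
    ((A, B, C, D, E) = (f V0, f V1, f V2, f V3, f V4) \/
     (A, B, C, D, E) = (f V0, f V2, f V4, f V1, f V3)).
Proof.
  intros Hnd Hnc H1 H2 H3 H4 H5.
  pose proof (pentagon_frame_not_collinear Hnd Hnc H1 H5) as Hd.
  assert (Hpar : pentagon_parallels A B C D E) by (repeat split; assumption).
  destruct (pentagon_parallels_coord Hd Hpar) as [x [Hx Hcoord]].
  destruct (pentagon_parallels_coord
              pentagon_vertices_not_collinear pentagon_vertices_parallels)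
    as [r [Hr Hreg]].
  destruct (golden_roots Hx Hr) as [-> | ->].
  - destruct (pentagon_coord_affine_equiv Hreg Hcoord) as [f [Hf Heq]].
    exists f, (pentagon_vertex 0), (pentagon_vertex 1), (pentagon_vertex 2),
      (pentagon_vertex 3), (pentagon_vertex 4).
    auto using regular_pentagon_vertices.
  - destruct (pentagon_coord_affine_equiv (pentagon_coord_star Hr Hreg) Hcoord)
      as [f [Hf Heq]].
    exists f, (pentagon_vertex 0), (pentagon_vertex 1), (pentagon_vertex 2),
      (pentagon_vertex 3), (pentagon_vertex 4).
    auto using regular_pentagon_vertices.
Qed.
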